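(* Let $X$ be a compact metric space, let $f:X\to X$ be continuous and let $x\in X$. If $\omega_f(x)$ is totally periodic, then $\omega_f(x)$ has finitely many connected components, and these components form a periodic cycle: they can be listed as $C_0,\dots,C_{k-1}$ with $f(C_0)=C_1, f(C_1)=C_2,\dots,f(C_{k-2})=C_{k-1}, f(C_{k-1})=C_0$.
   Context: For $x\in X$, the $\omega$-limit set is $\omega_f(x)=\{y\in X:\ \exists\, n_i\in\mathbb{N},\ n_i\to+\infty,\ \lim_{i\to\infty} d(f^{n_i}(x),y)=0\}$. A point $y$ is periodic if $f^n(y)=y$ for some $n\ge1$; $P(f)$ denotes the set of periodic points. The set $\omega_f(x)$ is called totally periodic if $\omega_f(x)\subset P(f)$. *)

From HB Require Import structures.
From mathcomp Require Import all_boot all_order all_algebra.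
From mathcomp Require Import all_classical all_reals all_analysis.
Set Implicit Arguments. Unset Strict Implicit. Unset Printing Implicit Defensive.
Import Order.TTheory GRing.Theory Num.Theory.
Local Open Scope classical_set_scope.

Definition omega_limit {T : topologicalType} (f : T -> T) (x : T) : set T :=
  [set y | exists u : nat -> nat,
      (u @ \oo --> \oo) /\ ((fun i => iter (u i) f x) @ \oo --> y)].

Definition periodic_point {T : Type} (f : T -> T) (y : T) : Prop :=
  exists n : nat, (1 <= n)%N /\ iter n f y = y.

Definition periodic_points {T : Type} (f : T -> T) : set T :=
  [set y | periodic_point f y].

Definition totally_periodic {T : topologicalType} (f : T -> T) (x : T) : Prop :=
  omega_limit f x `<=` periodic_points f.

Definition components {T : topologicalType} (A : set T) : set (set T) :=
  [set connected_component A y | y in A].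

From HB Require Import structures.
From mathcomp Require Import all_boot all_order all_algebra.
From mathcomp Require Import all_classical all_reals all_analysis.
Import Order.TTheory GRing.Theory Num.Theory.
Local Open Scope classical_set_scope.

(* Write Y for the omega-limit set.  Y is closed, nonempty and f-invariant, and
   it cannot be split into two disjoint closed pieces one of which is
   f-invariant: an orbit that eventually stays near Y and visits a
   neighbourhood of the invariant piece can never leave that neighbourhood.
   In a compact metric space the component of a point of Y is the
   intersection of the relatively clopen subsets of Y containing it, so any
   closed set missing that component is cut off by such a clopen set.
   Every point of Y is periodic, so Y is the union of the closed sets
   Q_n = {y | f^n y lies in the component of y}; a Baire-type argument with
   nested clopen sets yields a nonempty clopen E inside some Q_n, and the
   f-invariant clopen set of points whose orbit meets E within n steps is
   all of Y.  Hence f^n maps every component into itself; for y0 in Y the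
   components of Y are those of y0, f y0, ..., f^(k-1) y0, where k is least
   with f^k y0 in the component of y0, and f permutes them cyclically. *)

Lemma compact_directed_bigcap_neq0 {T : topologicalType} {I : Type} (D : set I)
    (F : I -> set T) :
  compact [set: T] -> D !=set0 -> (forall i, D i -> closed (F i)) ->
  (forall i, D i -> F i !=set0) ->
  (forall i j, D i -> D j -> exists2 k, D k & F k `<=` F i `&` F j) ->
  \bigcap_(i in D) F i !=set0.
Proof.
move=> cT [i0 Di0] cF neF dirF.
have FF : ProperFilter (filter_from D F).
  by apply: filter_from_proper neF; apply: filter_from_filter; first by exists i0.
have [p [_ cp]] := cT _ FF filterT.
by exists p => i Di; apply: (cF i Di) => B pB; apply: cp pB; exists i.
Qed.

Definition rel_clopen {T : topologicalType} (Y E : set T) :=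
  [/\ E `<=` Y, closed E & closed (Y `\` E)].

Section RelClopen.
Context {T : topologicalType}.
Hypothesis cT : compact [set: T].
Variable Y : set T.
Hypothesis cY : closed Y.

Lemma rel_clopenT : rel_clopen Y Y.
Proof. by split => //; rewrite setDv; exact: closed0. Qed.

Lemma rel_clopenI E1 E2 : rel_clopen Y E1 -> rel_clopen Y E2 -> rel_clopen Y (E1 `&` E2).
Proof.
move=> [s1 c1 d1] [s2 c2 d2]; split; [by move=> z [/s1]|exact: closedI|].
by rewrite setDIr; apply: closedU.
Qed.

Lemma rel_clopenU E1 E2 : rel_clopen Y E1 -> rel_clopen Y E2 -> rel_clopen Y (E1 `|` E2).
Proof.
move=> [s1 c1 d1] [s2 c2 d2]; split; [by move=> z [/s1|/s2]|exact: closedU|].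
by rewrite setDUr; apply: closedI.
Qed.

Lemma rel_clopenD_split E U V : rel_clopen Y E -> open U -> open V ->
  E `<=` U `|` V -> U `&` V = set0 -> rel_clopen Y (E `\` V).
Proof.
move=> [sE cE dE] oU oV EUV UV; split; first by move=> z [/sE].
  by apply: closedI => //; exact: open_closedC.
have -> : Y `\` (E `\` V) = (Y `\` E) `|` (E `\` U).
  apply/seteqP; split => z /=.
    move=> [Yz nEV]; have [Ez|] := pselect (E z); last by left.
    right; split => // Uz; apply: nEV; split => // Vz.
    by have : (U `&` V) z by []; rewrite UV.
  case=> [[Yz nE]|[Ez nU]]; first by split => // -[].
  by split; [exact: sE|move=> [_ nV]; have [] := EUV _ Ez].
by apply: closedU => //; apply: closedI => //; exact: open_closedC.
Qed.

Lemma rel_clopen_preimage (g : T -> T) E : continuous g -> (forall z, Y z -> Y (g z)) ->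
  rel_clopen Y E -> rel_clopen Y (Y `&` g @^-1` E).
Proof.
move=> cg gY [sE cE dE]; split; first by move=> z [].
  by apply: closedI => //; exact: preimage_closed.
have -> : Y `\` (Y `&` g @^-1` E) = Y `&` g @^-1` (Y `\` E).
  apply/seteqP; split => z /= [Yz].
    by move=> nE; split => //; split; [exact: gY|move=> Ez; apply: nE].
  by move=> [_ nE]; split => // -[].
by apply: closedI => //; exact: preimage_closed.
Qed.

Lemma connected_component_sub_rel_clopen E y : rel_clopen Y E -> E y ->
  connected_component Y y `<=` E.
Proof.
move=> [sE cE dE] Ey; set C := connected_component Y y.
suff CE : C `&` E = C by move=> z Cz; move: Cz; rewrite -CE => -[].
apply: component_connected.
- by exists y; split => //; apply: connected_component_refl; exact: sE.
- exists (~` (Y `\` E)); first by rewrite openC.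
  apply/seteqP; split => z /=; first by move=> [Cz Ez]; split => // -[].
  move=> [Cz nE]; split => //; apply: contrapT => nEz; apply: nE; split => //.
  exact: connected_component_sub Cz.
- by exists E.
Qed.

Lemma connected_component_image (g : T -> T) z w : continuous g ->
  (forall u, Y u -> Y (g u)) -> connected_component Y z w ->
  connected_component Y (g z) (g w).
Proof.
move=> cg gY czw; have Yz := connected_component_sub (connected_component_sym czw).
suff : g @` connected_component Y z `<=` connected_component Y (g z).
  by apply; exists w.
apply: connected_component_max.
- by exists z => //; apply: connected_component_refl.
- by move=> _ [v /connected_component_sub Yv <-]; exact: gY.
- apply: connected_continuous_connected; first exact: component_connected.
  exact: continuous_subspaceT.
Qed.

Definition quasi_component y :=
  \bigcap_(E in [set E | rel_clopen Y E /\ E y]) E.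

Lemma quasi_component_refl y : quasi_component y y.
Proof. by move=> E [_ Ey]. Qed.

Lemma quasi_component_closed y : closed (quasi_component y).
Proof. by apply: closed_bigI => E [[]]. Qed.

Lemma rel_clopen_avoid_quasi_component y K : Y y -> closed K ->
  K `&` quasi_component y = set0 ->
  exists E, [/\ rel_clopen Y E, E y & E `&` K = set0].
Proof.
move=> Yy cK KQ; apply: contrapT => noE.
pose D := [set E | rel_clopen Y E /\ E y].
have [p Dp] : \bigcap_(E in D) (E `&` K) !=set0.
  apply: compact_directed_bigcap_neq0 => //.
  - by exists Y; split => //; exact: rel_clopenT.
  - by move=> E [[_ cE _] _]; exact: closedI.
  - move=> E [cE Ey]; apply/set0P/negP => /eqP EK0; apply: noE.
    by exists E.
  - move=> E1 E2 [c1 y1] [c2 y2]; exists (E1 `&` E2); first by split; [exact: rel_clopenI|].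
    by move=> z [[]].
have : (K `&` quasi_component y) p.
  split; first by have [] := Dp Y (conj rel_clopenT Yy).
  by move=> E DE; have [] := Dp E DE.
by rewrite KQ.
Qed.

End RelClopen.

Section QuasiComponent.
Context {R : realType} {T : pseudoMetricType R}.
Hypothesis cT : compact [set: T].
Variable Y : set T.
Hypothesis cY : closed Y.

Lemma quasi_component_sub_closed y A1 A2 : Y y -> closed A1 -> closed A2 ->
  A1 `&` A2 = set0 -> quasi_component Y y `<=` A1 `|` A2 -> A1 y ->
  quasi_component Y y `<=` A1.
Proof.
move=> Yy cA1 cA2 A12 QA A1y.
have [U1 [U2 [oU1 oU2 AU1 AU2 U12]]] :=
  (@normal_openP R T).1 pseudometric_normal _ _ cA1 cA2 A12.
have UQ : ~` (U1 `|` U2) `&` quasi_component Y y = set0.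
  by apply/seteqP; split => z // [nU /QA [/AU1 ?|/AU2 ?]]; apply: nU; [left|right].
have [|E [clE Ey EU]] := rel_clopen_avoid_quasi_component cT Y cY y _ Yy _ UQ.
  by apply: open_closedC; exact: openU.
have clEU2 : rel_clopen Y (E `\` U2).
  apply: (rel_clopenD_split Y _ _ _ clE oU1 oU2 _ U12) => // z Ez; apply: contrapT => nU.
  by have : (E `&` ~` (U1 `|` U2)) z by []; rewrite EU.
have U2y : ~ U2 y.
  move=> U2y; suff : (U1 `&` U2) y by rewrite U12.
  by split => //; exact: AU1.
move=> z Qz; have [_ nU2z] := Qz _ (conj clEU2 (conj Ey U2y)).
by have [//|/AU2] := QA z Qz.
Qed.

Lemma quasi_component_connected y : Y y -> connected (quasi_component Y y).
Proof.
move=> Yy; set Qy := quasi_component Y y; move=> B [b Bb] [Op oOp BO] [Fc cFc BF].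
have cB : closed B by rewrite BF; apply: closedI => //; exact: quasi_component_closed.
have cQO : closed (Qy `\` Op).
  by apply: closedI; [exact: quasi_component_closed|exact: open_closedC].
have disj : B `&` (Qy `\` Op) = set0.
  by apply/seteqP; split => z // -[]; rewrite BO => -[_ Oz] [_].
have QBO : Qy `<=` B `|` (Qy `\` Op).
  by move=> z Qz; have [Oz|nOz] := pselect (Op z); [left; rewrite BO|right].
apply/seteqP; split; first by rewrite BO => z [].
have [By|nBy] := pselect (B y).
  exact: quasi_component_sub_closed _ _ _ Yy cB cQO disj QBO By.
have QO : Qy `<=` Qy `\` Op.
  apply: (quasi_component_sub_closed _ _ _ Yy cQO cB); first by rewrite setIC.
    by rewrite setUC.
  by have [//|] := QBO y (quasi_component_refl Y y).
have Bb' := Bb; rewrite BO in Bb'.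
by have [_] := QO b Bb'.1; case: Bb'.
Qed.

Lemma quasi_componentE y : Y y -> quasi_component Y y = connected_component Y y.
Proof.
move=> Yy; apply/seteqP; split.
  apply: connected_component_max; [exact: quasi_component_refl| |].
    by move=> z Qz; apply: (Qz Y); split => //; exact: rel_clopenT.
  exact: quasi_component_connected.
move=> z Cz E [clE Ey]; exact: connected_component_sub_rel_clopen Cz.
Qed.

Lemma rel_clopen_avoid_component y K : Y y -> closed K ->
  K `&` connected_component Y y = set0 ->
  exists E, [/\ rel_clopen Y E, E y & E `&` K = set0].
Proof.
by move=> Yy cK; rewrite -quasi_componentE //; exact: rel_clopen_avoid_quasi_component.
Qed.

End QuasiComponent.

Lemma metric_finite_set_closed {R : realType} {X : metricType R} (A : set X) :
  finite_set A -> closed A.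
Proof.
by apply: (@accessible_finite_set_closed X).1; exact/hausdorff_accessible/metric_hausdorff.
Qed.

Lemma iterC {T : Type} (f : T -> T) m n y :
  iter m f (iter n f y) = iter n f (iter m f y).
Proof. by rewrite -!iterD addnC. Qed.

Lemma periodic_point_return {T : Type} {f : T -> T} {z : T} j : periodic_point f z ->
  exists t, iter t f (iter j f z) = z.
Proof.
move=> [p [p1 fpz]]; exists (p.-1 * j)%N.
by rewrite -iterD -mulSnr prednK // mulnC iterM; exact: iter_fix.
Qed.

Section OmegaLimit.
Context {R : realType} {X : metricType R}.
Variables (f : X -> X) (x : X).
Hypotheses (cX : compact [set: X]) (cf : continuous f).

Local Notation Y := (omega_limit f x).
Local Notation orbit m := (iter m f x).

Lemma continuous_iter n : continuous (iter n f).
Proof.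
elim: n => [|n IH] z /=; first exact: cvg_id.
exact: (continuous_comp (IH z) (cf _)).
Qed.

Lemma omega_limitP y :
  Y y <-> forall U, nbhs y U -> forall N, exists2 m, (N <= m)%N & U (orbit m).
Proof.
split=> [[u [/cvgnyPge uoo uy]] U yU N|cy].
  have [i [Ni Ui]] := filter_ex (filterI (uoo N) (uy U yU)).
  by exists (u i).
have /choice[g gP] : forall Ni : nat * nat, exists m,
    (Ni.1 <= m)%N /\ ball y Ni.2.+1%:R^-1 (orbit m).
  move=> [N i]; have [m Nm bm] := cy _ (nbhsx_ballx y (i.+1%:R^-1 : R) ltac:(by [])) N.
  by exists m.
pose u := fix u i := if i is i'.+1 then g ((u i').+1, i) else g (0, 0)%N.
have ui i : (i <= u i)%N.
  by elim: i => [|i IH] //=; apply: leq_trans (gP _).1.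
exists u; split.
  apply/cvgnyPge => A; near=> i; apply: leq_trans (ui i).
  by near: i; exists A.
apply/cvg_ballP => e e0; have := near_infty_natSinv_lt (PosNum e0).
apply: filterS => i ie; apply: (le_ball (ltW ie)).
by case: i ie => [|i] _; [exact: (gP (0, 0)%N).2|exact: (gP (_, i.+1)).2].
Unshelve. all: by end_near.
Qed.

Lemma frequent_orbit_cluster (P : nat -> Prop) :
  (forall N, exists2 m, (N <= m)%N & P m) ->
  exists2 p, Y p & forall U, nbhs p U -> exists m, P m /\ U (orbit m).
Proof.
move=> frequentP.
pose tail N := [set orbit m | m in [set m | (N <= m)%N /\ P m]].
have [p tailp] : \bigcap_(N in setT) closure (tail N) !=set0.
  apply: (compact_directed_bigcap_neq0 _ _ cX); first by exists 0%N.
  - by move=> N _; exact: closed_closure.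
  - move=> N _; have [m Nm Pm] := frequentP N.
    by exists (orbit m); apply: subset_closure; exists m.
  - move=> i j _ _; exists (maxn i j) => //.
    have tailS k : (k <= maxn i j)%N -> tail (maxn i j) `<=` tail k.
      by move=> km _ [m [Nm Pm] <-]; exists m => //; split => //; exact: leq_trans Nm.
    by move=> z z_cl; split; apply: closureS z_cl; apply: tailS;
      [exact: leq_maxl|exact: leq_maxr].
have tailE N U : nbhs p U -> exists2 m, (N <= m)%N & P m /\ U (orbit m).
  by move=> pU; have [_ [[m [Nm Pm] <-] Um]] := tailp N I U pU; exists m.
exists p.
  by apply/omega_limitP => U pU N; have [m Nm [_ Um]] := tailE N U pU; exists m.
by move=> U pU; have [m _ PUm] := tailE 0%N U pU; exists m.
Qed.

Lemma omega_limit_closed : closed Y.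
Proof.
move=> p cp; apply/omega_limitP => U; rewrite nbhsE => -[V [oV Vp] VU] N.
have [z [Yz Vz]] := cp V (open_nbhs_nbhs (conj oV Vp)).
have [m Nm Vm] := (omega_limitP z).1 Yz V (open_nbhs_nbhs (conj oV Vz)) N.
by exists m => //; exact: VU.
Qed.

Lemma omega_limit_neq0 : Y !=set0.
Proof.
have [|p Yp _] := @frequent_orbit_cluster (fun=> True); first by move=> N; exists N.
by exists p.
Qed.

Lemma omega_limit_invariant y : Y y -> Y (f y).
Proof.
move=> /omega_limitP cy; apply/omega_limitP => U fyU N.
have [m Nm Um] := cy _ (cf y _ fyU) N.
by exists m.+1 => //; exact: leq_trans Nm _.
Qed.

Lemma omega_limit_iter n y : Y y -> Y (iter n f y).
Proof. by elim: n => [|n IH] //= Yy; apply: omega_limit_invariant; exact: IH. Qed.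

Lemma omega_limit_attracts U : open U -> Y `<=` U ->
  exists N, forall m, (N <= m)%N -> U (orbit m).
Proof.
move=> oU YU; apply: contrapT => noN.
have [|p Yp] := @frequent_orbit_cluster (fun m => ~ U (orbit m)).
  move=> N; apply: contrapT => hN; apply: noN; exists N => m Nm.
  by apply: contrapT => nU; apply: hN; exists m.
by move=> /(_ U (open_nbhs_nbhs (conj oU (YU _ Yp)))) [m []].
Qed.

Lemma omega_limit_invariant_rel_clopen A : rel_clopen Y A ->
  (forall a, A a -> A (f a)) -> A !=set0 -> Y `<=` A.
Proof.
move=> [AY cA cYA] fA [a Aa] b Yb; apply: contrapT => nAb.
have AYA : A `&` (Y `\` A) = set0 by apply/seteqP; split => z // [? []].
have [UA [UB [oUA oUB AUA YAUB UAB]]] :=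
  (@normal_openP R X).1 pseudometric_normal _ _ cA cYA AYA.
have UAUB z : UA z -> UB z -> False.
  by move=> UAz UBz; suff : (UA `&` UB) z by rewrite UAB.
pose U := UA `&` f @^-1` UA.
have oU : open U by apply: openI => //; exact: open_comp.
have AU : A `<=` U by move=> z Az; split; apply: AUA => //; exact: fA.
have [N UUB] : exists N, forall m, (N <= m)%N -> (U `|` UB) (orbit m).
  apply: omega_limit_attracts; first exact: openU.
  by move=> z Yz; have [/AU|] := pselect (A z); [left|right; exact: YAUB].
have [m0 Nm0 Um0] := (omega_limitP a).1 (AY _ Aa) U
  (open_nbhs_nbhs (conj oU (AU _ Aa))) N.
(* f maps U into UA, which misses UB: the orbit can never leave U again. *)
have stays k : U (orbit (k + m0)).
  elim: k => [//|k [_ fUA]].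
  have [//|UBk] := UUB (k.+1 + m0)%N (leq_trans Nm0 (leq_addl _ _)).
  by have := UAUB _ fUA UBk.
have [m1 m01 UBm1] := (omega_limitP b).1 Yb UB
  (open_nbhs_nbhs (conj oUB (YAUB _ (conj Yb nAb)))) m0.
by have [UAm1 _] := stays (m1 - m0)%N; rewrite subnK // in UAm1; exact: UAUB UAm1 UBm1.
Qed.

Local Notation comp := (connected_component Y).

Lemma connected_component_iter n {z w} : comp z w -> comp (iter n f z) (iter n f w).
Proof.
by apply: connected_component_image; [exact: continuous_iter|exact: omega_limit_iter].
Qed.

Lemma connected_component_iter_mul {k y} : comp y (iter k f y) ->
  forall q, comp y (iter (q * k) f y).
Proof.
move=> yk; elim=> [|q IH].
  apply: connected_component_refl.
  exact: connected_component_sub (connected_component_sym yk).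
rewrite mulSn iterD; apply: connected_component_trans IH _.
by rewrite -iterC; exact: connected_component_iter.
Qed.

Lemma connected_component_iter_mod {k y} r : comp y (iter k f y) ->
  comp (iter (r %% k) f y) (iter r f y).
Proof.
move=> yk; rewrite {2}(divn_eq r k) iterD.
by apply: connected_component_iter_mul; rewrite iterC; exact: connected_component_iter.
Qed.

Definition component_returns n := [set y | Y y /\ comp y (iter n f y)].

Lemma component_returns_closed n : closed (component_returns n).
Proof.
move=> p cp; have Yp : Y p by apply: omega_limit_closed; apply: closureS cp => z [].
split => //; apply: contrapT => ncomp.
have [||E [clE Ep En]] :=
  rel_clopen_avoid_component cX Y omega_limit_closed p [set iter n f p] Yp.
- by apply: metric_finite_set_closed; exact: finite_set1.
- by apply/seteqP; split => _ // [-> /ncomp].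
(* Near p, points of Y lie in E while f^n sends them out of E; a point of
   component_returns n cannot do that, its component being inside E. *)
pose O := ~` (Y `\` E) `&` iter n f @^-1` (~` E).
have oO : open O.
  have [_ cE cYE] := clE; apply: openI; first exact: closed_openC.
  by apply: open_comp; [move=> z _; exact: continuous_iter|exact: closed_openC].
have Op : O p.
  by split => [[]//|Enp]; suff : (E `&` [set iter n f p]) (iter n f p) by rewrite En.
have [z [[Yz zn] [nYE nEn]]] := cp O (open_nbhs_nbhs (conj oO Op)).
have Ez : E z by apply: contrapT => nEz; exact: nYE.
by apply: nEn; exact: connected_component_sub_rel_clopen clE Ez _ zn.
Qed.

Lemma rel_clopen_avoid_component_returns n E : rel_clopen Y E ->
  ~ E `<=` component_returns n ->
  exists E', [/\ rel_clopen Y E', E' !=set0, E' `<=` E & E' `&` component_returns n = set0].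
Proof.
move=> clE /existsNP[z /not_implyP[Ez nz]]; have Yz : Y z by case: clE => + _ _; exact.
have [||E' [clE' E'z E'n]] := rel_clopen_avoid_component cX Y omega_limit_closed z
  (component_returns n) Yz.
- exact: component_returns_closed.
- apply/seteqP; split => w // [[Yw wn] zw]; apply: nz; split => //.
  apply: (connected_component_trans zw); apply: (connected_component_trans wn).
  exact/connected_component_iter/connected_component_sym.
exists (E `&` E'); split.
- exact: rel_clopenI.
- by exists z.
- by move=> w [].
- by rewrite -setIA E'n setI0.
Qed.

Definition visitors (E : set X) n :=
  [set z | Y z /\ exists2 j, (j < n)%N & E (iter j f z)].

Lemma rel_clopen_visitors E n : rel_clopen Y E -> rel_clopen Y (visitors E n).
Proof.
move=> clE; elim: n => [|n IH].
  have -> : visitors E 0 = set0 by apply/seteqP; split => z // [_ []].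
  by split => //; [exact: closed0|rewrite setD0; exact: omega_limit_closed].
have -> : visitors E n.+1 = visitors E n `|` (Y `&` iter n f @^-1` E).
  apply/seteqP; split => z /=.
    move=> [Yz [j]]; rewrite ltnS leq_eqVlt => /orP[/eqP ->|jn] Ej; first by right.
    by left; split => //; exists j.
  by case=> [[Yz [j jn Ej]]|[Yz Ez]]; split => //; [exists j => //; exact: ltnW|exists n].
apply: rel_clopenU IH _; apply: rel_clopen_preimage clE.
- exact: omega_limit_closed.
- exact: continuous_iter.
- exact: omega_limit_iter.
Qed.

Lemma visitors_invariant E n : (0 < n)%N -> rel_clopen Y E ->
  (forall w, E w -> comp w (iter n f w)) ->
  forall z, visitors E n z -> visitors E n (f z).
Proof.
move=> n0 clE Ereturn z [Yz [j jn Ej]]; split; first exact: omega_limit_invariant.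
case: j jn Ej => [|j] jn Ej; last by exists j; [exact: ltnW|rewrite -iterSr].
exists n.-1; first by rewrite prednK.
rewrite -iterSr prednK //.
exact: connected_component_sub_rel_clopen clE Ej _ (Ereturn z Ej).
Qed.

Lemma visitorsT {E n} : (0 < n)%N -> rel_clopen Y E -> E !=set0 ->
  (forall w, E w -> comp w (iter n f w)) -> Y `<=` visitors E n.
Proof.
move=> n0 clE [e Ee] Ereturn; apply: omega_limit_invariant_rel_clopen.
- exact: rel_clopen_visitors.
- exact: visitors_invariant.
- by exists e; split; [case: clE => + _ _; exact|exists 0%N].
Qed.

Hypothesis tp : totally_periodic f x.

Lemma exists_rel_clopen_component_returns : exists n E,
  [/\ (0 < n)%N, rel_clopen Y E, E !=set0 & E `<=` component_returns n].
Proof.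
(* Otherwise shrink Y to nested nonempty clopen sets S k missing
   component_returns k; a common point is periodic, say of period k, and so
   lies in component_returns k. *)
apply: contrapT => noE.
pose shrunk n E E' :=
  [/\ rel_clopen Y E', E' !=set0, E' `<=` E & E' `&` component_returns n = set0].
have shrinks n E : (0 < n)%N -> rel_clopen Y E -> E !=set0 ->
    shrunk n E (xget Y (shrunk n E)).
  move=> n0 clE neE; apply: xgetPex; apply: (rel_clopen_avoid_component_returns _ _ clE).
  by move=> En; apply: noE; exists n, E.
pose S := fix S k := if k is k'.+1 then xget Y (shrunk k (S k')) else Y.
have S_clopen k : rel_clopen Y (S k) /\ S k !=set0.
  elim: k => [|k [clS neS]].
    by split; [exact: rel_clopenT omega_limit_closed|exact: omega_limit_neq0].
  by have [] := shrinks k.+1 (S k) isT clS neS.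
have S_next k : shrunk k.+1 (S k) (S k.+1).
  by have [clS neS] := S_clopen k; exact: shrinks.
have S_decr i j : (i <= j)%N -> S j `<=` S i.
  move/subnK <-; elim: (j - i)%N => [//|d IH]; rewrite addSn.
  by apply: subset_trans IH; have [] := S_next (d + i)%N.
have [p Sp] : \bigcap_(k in setT) S k !=set0.
  apply: (compact_directed_bigcap_neq0 _ _ cX); first by exists 0%N.
  - by move=> k _; have [[]] := S_clopen k.
  - by move=> k _; have [] := S_clopen k.
  - move=> i j _ _; exists (maxn i j) => // z Sz.
    by split; apply: S_decr Sz; [exact: leq_maxl|exact: leq_maxr].
have Yp : Y p := Sp 0%N I.
have [[|n] [// _ fnp]] := tp p Yp.
have pn : component_returns n.+1 p.
  by split => //; rewrite fnp; exact: connected_component_refl.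
have [_ _ _ Sn] := S_next n.
suff : (S n.+1 `&` component_returns n.+1) p by rewrite Sn.
by split; [exact: Sp|].
Qed.

Lemma uniform_component_return :
  exists2 n, (0 < n)%N & forall z, Y z -> comp z (iter n f z).
Proof.
have [n [E [n0 clE neE En]]] := exists_rel_clopen_component_returns.
exists n => // z Yz.
have [_ [j _ Ej]] := visitorsT n0 clE neE (fun w Ew => (En w Ew).2) _ Yz.
have [t tjz] := periodic_point_return j (tp _ Yz).
by have := connected_component_iter t (En _ Ej).2; rewrite (iterC _ t n) tjz.
Qed.

Lemma connected_component_iter_cancel z i j : Y z ->
  comp (iter i f z) (iter (j + i) f z) -> comp z (iter j f z).
Proof.
move=> Yz; have [t tiz] := periodic_point_return i (tp _ Yz).
by move/(connected_component_iter t); rewrite iterD (iterC _ t j) tiz.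
Qed.

Section UniformReturn.
Variable n : nat.
Hypotheses (n0 : (0 < n)%N) (nret : forall z, Y z -> comp z (iter n f z)).

Lemma image_connected_component z : Y z -> f @` comp z = comp (f z).
Proof.
move=> Yz; apply/seteqP; split=> [_ [w zw <-]|w fzw].
  exact: (connected_component_iter 1 zw).
have [p [p1 fpw]] := tp _ (connected_component_sub fzw).
have pn0 : (0 < p * n)%N by rewrite muln_gt0 p1.
(* With p a period of w, f^(pn-1) w is a preimage of w in the component of z. *)
exists (iter (p * n).-1 f w); last first.
  by rewrite -iterS prednK // mulnC iterM; exact: iter_fix.
apply: (connected_component_trans (connected_component_iter_mul (nret _ Yz) p)).
by have := connected_component_iter (p * n).-1 fzw; rewrite -iterSr prednK.
Qed.

Lemma connected_component_iter_cover y0 : Y y0 ->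
  forall z, Y z -> exists2 r, (r < n)%N & comp (iter r f y0) z.
Proof.
move=> Yy0 z Yz; apply: contrapT => noR.
pose D := [set iter j f z | j in `I_n].
have [||E [clE Ey0 ED]] := rel_clopen_avoid_component cX Y omega_limit_closed y0 D Yy0.
- by apply: metric_finite_set_closed; apply: finite_image; exact: finite_II.
- apply/seteqP; split => _ // [[j jn <-] y0j].
  have [t tjz] := periodic_point_return j (tp _ Yz).
  have := connected_component_iter t y0j; rewrite tjz => ty0z.
  apply: noR; exists (t %% n)%N; first by rewrite ltn_pmod.
  apply: connected_component_trans ty0z.
  exact: connected_component_iter_mod (nret _ Yy0).
have EY : E `<=` Y by case: clE.
have [_ [j jn Ej]] := visitorsT n0 clE (ex_intro _ y0 Ey0) (fun w Ew => nret _ (EY _ Ew)) _ Yz.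
suff : (E `&` D) (iter j f z) by rewrite ED.
by split => //; exists j.
Qed.

Section Cycle.
Variables (y0 : X) (k : nat).
Hypotheses (Yy0 : Y y0) (k0 : (0 < k)%N) (y0k : comp y0 (iter k f y0)).
Hypothesis kmin : forall j, (0 < j < k)%N -> ~ comp y0 (iter j f y0).

Lemma components_omega_limit :
  components Y = [set comp (iter i f y0) | i in `I_k].
Proof.
apply/seteqP; split=> [_ [z Yz <-]|_ [i _ <-]]; last first.
  by exists (iter i f y0) => //; exact: omega_limit_iter.
have [r _ y0rz] := connected_component_iter_cover _ Yy0 _ Yz.
exists (r %% k)%N; first by rewrite /= ltn_pmod.
rewrite (same_connected_component (connected_component_iter_mod r y0k)).
exact: same_connected_component.
Qed.

Lemma connected_component_iter_inj :
  {in `I_k &, injective (fun i => comp (iter i f y0))}.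
Proof.
suff lt_neq i j : (i < j)%N -> (j < k)%N -> comp (iter i f y0) <> comp (iter j f y0).
  move=> i j /set_mem ik /set_mem jk /= Cij.
  case: (ltngtP i j) => // [ij|ji].
    by case: (lt_neq i j ij jk Cij).
  by case: (lt_neq j i ji ik (esym Cij)).
move=> ij jk Cij; apply: (kmin (j - i)).
  by rewrite subn_gt0 ij (leq_ltn_trans (leq_subr _ _) jk).
apply: (connected_component_iter_cancel y0 i _ Yy0); rewrite subnK ?(ltnW ij) //.
by rewrite Cij; apply: connected_component_refl; exact: omega_limit_iter.
Qed.

Lemma image_iter_component i :
  f @` comp (iter i f y0) = comp (iter (i.+1 %% k) f y0).
Proof.
rewrite image_connected_component; last exact: omega_limit_iter.
apply/same_connected_component/connected_component_sym.
exact: (connected_component_iter_mod i.+1 y0k).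
Qed.

End Cycle.

End UniformReturn.

End OmegaLimit.

Theorem theorem1p1 (R : realType) (X : metricType R) (f : X -> X) (x : X) :
  compact [set: X] -> continuous f ->
  totally_periodic f x ->
  finite_set (components (omega_limit f x)) /\
  exists (k : nat) (C : nat -> set X),
    (0 < k)%N /\
    components (omega_limit f x) = C @` `I_k /\
    {in `I_k &, injective C} /\
    (forall i, (i < k)%N -> f @` C i = C ((i.+1) %% k)%N).
Proof.
move=> cX cf tp; set Y := omega_limit f x.
have [n n0 nret] := uniform_component_return f x cX cf tp.
have [y0 Yy0] := omega_limit_neq0 f x cX.
have : exists k, (0 < k)%N && `[< connected_component Y y0 (iter k f y0) >].
  by exists n; rewrite n0; apply/asboolP; exact: nret.
case/ex_minnP => k /andP[k0 /asboolP y0k] kmin.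
have kmin' j : (0 < j < k)%N -> ~ connected_component Y y0 (iter j f y0).
  move=> /andP[j0 jk] /asboolP y0j; have := kmin j.
  by rewrite j0 y0j leqNgt jk => /(_ isT).
rewrite (components_omega_limit _ _ cX cf tp _ n0 nret _ _ Yy0 k0 y0k).
split; first by apply: finite_image; exact: finite_II.
exists k, (fun i => connected_component Y (iter i f y0)); split=> //; split=> //.
split; first exact: (connected_component_iter_inj _ _ cf tp _ _ Yy0 kmin').
by move=> i _; exact: (image_iter_component _ _ cf tp _ n0 nret _ _ Yy0 y0k).
Qed.
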